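(* Let $W\in\mathbb{R}^{m\times n}$ with columns $W_1,\dots,W_n$ and $F=WW^\top$, and assume every $W_i$ is an eigenvector of $F$ with positive eigenvalue. Let $\lambda_k>0$ be an eigenvalue of $F$, $C_k:=\{i:FW_i=\lambda_kW_i\}$ with $p:=|C_k|$, $V_k:=\operatorname{span}\{W_i:i\in C_k\}$, and $M_k:=W_{C_k}^\top W_{C_k}\in\mathbb{R}^{p\times p}$ the Gram matrix of these columns. Then the cluster $C_k$ has simplex geometry if and only if $M_k$ has exactly two eigenspaces $$W_0=\ker(M_k)=\operatorname{span}(\mathbf{1}),\qquad W_1=\operatorname{Im}(M_k)=\mathbf{1}^\perp,$$ with eigenvalue $0$ on $W_0$ and eigenvalue $\lambda_k=\frac{|C_k|}{\dim(V_k)}$ on $W_1$.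
   Context: $\mathbf{1}\in\mathbb{R}^p$ is the all-ones vector. A cluster of $p\ge2$ vectors $(W_i)_{i\in C_k}$ has simplex geometry if $\|W_i\|=1$ for all $i$ and $\langle W_i,W_j\rangle=-\frac{1}{p-1}$ for all $i\neq j$ (equivalently, its Gram matrix is $\frac{p}{p-1}(I-\frac1pJ)$, $J$ the all-ones matrix). *)

From HB Require Import structures.
From mathcomp Require Import all_boot all_order all_algebra.
Set Implicit Arguments. Unset Strict Implicit. Unset Printing Implicit Defensive.
Import Order.TTheory GRing.Theory Num.Theory.
Local Open Scope ring_scope.

Section Defs.
Variable R : rcfType.

Definition dotc m (u v : 'cV[R]_m) : R := (u^T *m v) 0 0.
Definition normc m (u : 'cV[R]_m) : R := Num.sqrt (dotc u u).

Definition Fmat m n (W : 'M[R]_(m, n)) : 'M[R]_m := W *m W^T.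

Definition cluster m n (W : 'M[R]_(m, n)) (lam : R) : {set 'I_n} :=
  [set i | Fmat W *m col i W == lam *: col i W].

(* W_{C_k}: the m x |C_k| matrix of the columns W_i, i in C_k (in increasing order) *)
Definition clusterMx m n (W : 'M[R]_(m, n)) (lam : R)
  : 'M[R]_(m, #|cluster W lam|) :=
  colsub (fun j : 'I_#|cluster W lam| => enum_val j) W.

Definition gramMx m n (W : 'M[R]_(m, n)) (lam : R) : 'M[R]_#|cluster W lam| :=
  (clusterMx W lam)^T *m clusterMx W lam.

Definition simplex_geometry m p (X : 'M[R]_(m, p)) : Prop :=
  (2 <= p)%N /\
  (forall i : 'I_p, normc (col i X) = 1) /\
  (forall i j : 'I_p, i != j -> dotc (col i X) (col j X) = - (p.-1%:R)^-1).

End Defs.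

From mathcomp Require Import ring.
From HB Require Import structures.
From mathcomp Require Import all_boot all_order all_algebra.
Import Order.TTheory GRing.Theory Num.Theory.
Set Implicit Arguments. Unset Strict Implicit. Unset Printing Implicit Defensive.
Local Open Scope ring_scope.

(* Eigenvectors of the symmetric matrix F = W W^T for distinct eigenvalues are
   orthogonal, so F X = X M for the cluster matrix X = W_{C_k}; together with
   F X = lambda X this gives X M = lambda X, hence M^2 = lambda M and
   rank M = rank X.  Simplex geometry says exactly that M = p/(p-1) (I - J/p),
   a multiple of the centering projection onto 1^perp.  Two symmetric
   idempotents with the same row space are equal, so M / lambda is the
   centering projection as soon as Im M = 1^perp, and comparing the scales
   gives lambda = p/(p-1) = p / rank X. *)

Section Centering.
Variables (R : fieldType) (p : nat).
Local Notation ones_col := (const_mx 1 : 'M[R]_(p, 1)).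
Local Notation ones_row := (const_mx 1 : 'M[R]_(1, p)).

Definition centering_mx : 'M[R]_p := 1%:M - p%:R^-1 *: const_mx 1.
Local Notation Q := centering_mx.

Lemma ones_col_mul_row : ones_col *m ones_row = const_mx 1.
Proof. by apply/matrixP=> i j; rewrite !mxE big_ord1 !mxE mulr1. Qed.

Lemma ones_row_mul_col : ones_row *m ones_col = p%:R%:M.
Proof.
apply/matrixP=> i j; rewrite !ord1 !mxE eqxx mulr1n.
by rewrite (eq_bigr (fun _ => 1)) ?sumr_const ?card_ord // => l _; rewrite !mxE mulr1.
Qed.

Lemma mul_centering_mx k (A : 'M[R]_(k, p)) :
  A *m Q = A - p%:R^-1 *: (A *m ones_col *m ones_row).
Proof. by rewrite mulmxBr mulmx1 -scalemxAr -mulmxA ones_col_mul_row. Qed.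

Lemma centering_mx_id k (A : 'M[R]_(k, p)) : A *m ones_col = 0 -> A *m Q = A.
Proof. by move=> A1; rewrite mul_centering_mx A1 mul0mx scaler0 subr0. Qed.

Lemma sub_ones_row k (A : 'M[R]_(k, p)) : A *m Q = 0 -> (A <= ones_row)%MS.
Proof.
rewrite mul_centering_mx => /eqP; rewrite subr_eq0 => /eqP ->.
by rewrite scalemxAl submxMl.
Qed.

Lemma trmx_centering : Q^T = Q.
Proof. by rewrite linearB /= linearZ /= trmx1 trmx_const. Qed.

Hypothesis p_neq0 : p%:R != 0 :> R.

Lemma centering_mx_ones : Q *m ones_col = 0.
Proof.
rewrite mulmxBl mul1mx -scalemxAl -ones_col_mul_row -mulmxA ones_row_mul_col.
by rewrite mul_mx_scalar scalerA mulVf // scale1r subrr.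
Qed.

Lemma centering_mx_idem : Q *m Q = Q.
Proof. exact: centering_mx_id centering_mx_ones. Qed.

Lemma kermx_centering : (kermx Q == ones_row)%MS.
Proof.
apply/andP; split; first exact/sub_ones_row/mulmx_ker.
apply/sub_kermxP/trmx_inj.
by rewrite trmx_mul trmx_centering trmx_const centering_mx_ones trmx0.
Qed.

Lemma centering_eq_ones_perp : (Q == kermx ones_col)%MS.
Proof.
apply/andP; split; first exact/sub_kermxP/centering_mx_ones.
by rewrite -[X in (X <= _)%MS](centering_mx_id (mulmx_ker _)) submxMl.
Qed.

End Centering.

Lemma rank_ones_perp (R : fieldType) p :
  (0 < p)%N -> \rank (kermx (const_mx 1 : 'M[R]_(p, 1))) = p.-1.
Proof.
move=> p_gt0; rewrite mxrank_ker -subn1; congr (_ - _)%N.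
apply/eqP; rewrite eqn_leq rank_leq_col lt0n mxrank_eq0.
apply/eqP=> /matrixP/(_ (Ordinal p_gt0) 0); rewrite !mxE => /eqP.
by rewrite oner_eq0.
Qed.

Lemma kermxZ (R : fieldType) m n (a : R) (A : 'M[R]_(m, n)) :
  a != 0 -> (kermx (a *: A) == kermx A)%MS.
Proof.
move=> a_neq0; apply/andP; split; apply/sub_kermxP.
  have /eqP := mulmx_ker (a *: A).
  by rewrite -scalemxAr scalemx_eq0 (negbTE a_neq0) => /eqP.
by rewrite -scalemxAr mulmx_ker scaler0.
Qed.

Lemma eigenspace0 (R : fieldType) n (A : 'M[R]_n) : eigenspace A 0 = kermx A.
Proof. by rewrite /eigenspace raddf0 subr0. Qed.

Lemma sym_idem_eqmx (R : fieldType) n (P Q : 'M[R]_n) :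
  P^T = P -> Q^T = Q -> P *m P = P -> Q *m Q = Q -> (P == Q)%MS -> P = Q.
Proof.
have absorb (A B : 'M[R]_n) : B *m B = B -> (A <= B)%MS -> A *m B = A.
  by move=> BB /submxP[D ->]; rewrite -mulmxA BB.
move=> PT QT PP QQ /andP[PQ QP].
by rewrite -PT -(absorb _ _ QQ PQ) trmx_mul PT QT (absorb _ _ PP QP).
Qed.

Section ScaledProjection.
Variables (R : fieldType) (n : nat) (M : 'M[R]_n) (lam : R).
Hypothesis M_idem : M *m M = lam *: M.

Lemma eigenvalue_scaled_proj a : eigenvalue M a -> a = 0 \/ a = lam.
Proof.
case/eigenvalueP=> v vM v_neq0.
have : (a * a) *: v = (lam * a) *: v.
  by rewrite -!scalerA -vM scalemxAl -vM -mulmxA M_idem -scalemxAr.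
move/eqP; rewrite -subr_eq0 -scalerBl scalemx_eq0 (negbTE v_neq0) orbF.
by rewrite -mulrBl mulf_eq0 subr_eq0 => /orP[] /eqP; [right | left].
Qed.

Lemma scaled_proj_scale (Q : 'M[R]_n) a :
  Q *m Q = Q -> M = a *: Q -> M != 0 -> lam = a.
Proof.
move=> QQ MQ M_neq0; have : M *m M = a *: M.
  by rewrite {1}MQ -scalemxAl MQ -scalemxAr QQ.
rewrite M_idem => /eqP; rewrite -subr_eq0 -scalerBl scalemx_eq0 (negbTE M_neq0).
by rewrite orbF subr_eq0 => /eqP.
Qed.

Hypothesis lam_neq0 : lam != 0.

Lemma eigenspace_scaled_proj : (eigenspace M lam == M)%MS.
Proof.
apply/andP; split; last first.
  by apply/sub_kermxP; rewrite mulmxBr mul_mx_scalar M_idem subrr.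
have /eigenspaceP EM := submx_refl (eigenspace M lam).
rewrite -[X in (X <= _)%MS](scale1r) -(mulVf lam_neq0) -scalerA -EM.
by rewrite scalemxAl submxMl.
Qed.

Hypothesis M_sym : M^T = M.

Lemma scaled_proj_eq_centering :
  n%:R != 0 :> R -> (M == kermx (const_mx 1 : 'M[R]_(n, 1)))%MS ->
  M = lam *: centering_mx R n.
Proof.
move=> n_neq0 /eqmxP M_perp.
suff -> : centering_mx R n = lam^-1 *: M by rewrite scalerA mulfV // scale1r.
apply/esym/sym_idem_eqmx.
- by rewrite linearZ /= M_sym.
- exact: trmx_centering.
- by rewrite -scalemxAl -scalemxAr M_idem !scalerA mulrAC mulVf // mul1r.
- exact: centering_mx_idem.
apply/eqmxP; apply: eqmx_trans (eqmx_scale _ (invr_neq0 lam_neq0)) _.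
by apply: eqmx_trans M_perp _; apply/eqmx_sym/eqmxP/centering_eq_ones_perp.
Qed.

End ScaledProjection.

Lemma scaled_centering_proj (R : numFieldType) p (M : 'M[R]_p) lam :
  M *m M = lam *: M -> (1 < p)%N ->
  M = (p%:R / p.-1%:R) *: centering_mx R p ->
  [/\ (kermx M == (const_mx 1 : 'rV[R]_p))%MS,
      (M == kermx (const_mx 1 : 'cV[R]_p))%MS, \rank M = p.-1 & lam = p%:R / p.-1%:R].
Proof.
move=> MM p_gt1 ME.
have p_neq0 : p%:R != 0 :> R by rewrite pnatr_eq0 -lt0n ltnW.
have q_gt0 : (0 < p.-1)%N by rewrite -ltnS prednK // ltnW.
have a_neq0 : p%:R / p.-1%:R != 0 :> R.
  by rewrite mulf_neq0 // invr_eq0 pnatr_eq0 -lt0n.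
have imM : (M == kermx (const_mx 1 : 'cV[R]_p))%MS.
  apply/eqmxP; rewrite ME; apply: eqmx_trans (eqmx_scale _ a_neq0) _.
  exact/eqmxP/centering_eq_ones_perp.
have rkM : \rank M = p.-1 by rewrite (eqmx_rank imM) rank_ones_perp // ltnW.
split=> //.
  apply/eqmxP; rewrite ME; apply: eqmx_trans (eqmxP (kermxZ _ a_neq0)) _.
  exact/eqmxP/kermx_centering.
have M_neq0 : M != 0 by rewrite -mxrank_eq0 rkM -lt0n.
exact: (scaled_proj_scale MM (centering_mx_idem p_neq0) ME M_neq0).
Qed.

Lemma eigenvectors_sym_orthogonal (R : idomainType) n (A : 'M[R]_n)
    (u v : 'cV[R]_n) a b :
  A^T = A -> A *m u = a *: u -> A *m v = b *: v -> a != b -> u^T *m v = 0.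
Proof.
move=> AT Au Av ab.
have : a *: (u^T *m v) = b *: (u^T *m v).
  by rewrite scalemxAl -linearZ /= -Au trmx_mul AT -mulmxA Av scalemxAr.
move/eqP; rewrite -subr_eq0 -scalerBl scalemx_eq0 subr_eq0 (negbTE ab).
by move/eqP.
Qed.

Section Dot.
Variable R : rcfType.

Lemma trmx_mul_entry m n1 n2 (A : 'M[R]_(m, n1)) (B : 'M[R]_(m, n2)) i j :
  (A^T *m B) i j = dotc (col i A) (col j B).
Proof. by rewrite /dotc !mxE; apply: eq_bigr => l _; rewrite !mxE. Qed.

Lemma normc_eq1 m (u : 'cV[R]_m) : (normc u = 1) <-> (dotc u u = 1).
Proof.
rewrite /normc; split=> [uu1 | ->]; last exact: sqrtr1.
have uu_ge0 : 0 <= dotc u u.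
  by rewrite /dotc mxE sumr_ge0 // => l _; rewrite !mxE -expr2 sqr_ge0.
by rewrite -(sqr_sqrtr uu_ge0) uu1 expr1n.
Qed.

Lemma simplex_geometryE m p (X : 'M[R]_(m, p)) :
  simplex_geometry X <->
  (1 < p)%N /\ X^T *m X = (p%:R / p.-1%:R) *: centering_mx R p.
Proof.
rewrite /simplex_geometry; case: (ltnP 1 p) => [p_gt1 | p_le1]; last first.
  by split=> -[].
have q_neq0 : p.-1%:R != 0 :> R by rewrite pnatr_eq0 -lt0n -ltnS prednK // ltnW.
have pE : p%:R = p.-1%:R + 1 :> R by rewrite natr1 prednK // ltnW.
have p_neq0 : p.-1%:R + 1 != 0 :> R by rewrite -pE pnatr_eq0 -lt0n ltnW.
have Gram_entry i j : ((p%:R / p.-1%:R) *: centering_mx R p) i j =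
    if i == j then 1 else - p.-1%:R^-1.
  rewrite !mxE pE; case: eqP => _ /=; field; exact/andP.
split=> [[_ [normX dotX]] | [_ XX]].
  split=> //; apply/matrixP=> i j; rewrite trmx_mul_entry Gram_entry.
  by case: eqVneq => [<- | /dotX //]; apply/normc_eq1.
split=> //; split=> [i | i j ij]; last by rewrite -trmx_mul_entry XX Gram_entry (negbTE ij).
by apply/normc_eq1; rewrite -trmx_mul_entry XX Gram_entry eqxx.
Qed.

End Dot.

Section Cluster.
Variables (R : rcfType) (m n : nat) (W : 'M[R]_(m, n)) (lam : R).
Local Notation X := (clusterMx W lam).
Local Notation M := (gramMx W lam).

Lemma trmx_Fmat : (Fmat W)^T = Fmat W.
Proof. by rewrite trmx_mul trmxK. Qed.

Lemma trmx_gramMx : M^T = M.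
Proof. by rewrite trmx_mul trmxK. Qed.

Lemma clusterMxE a j : X a j = W a (enum_val j).
Proof. exact: mxE. Qed.

Lemma col_clusterMx j : col j X = col (enum_val j) W.
Proof. exact: col_colsub. Qed.

Lemma Fmat_clusterMx : Fmat W *m X = lam *: X.
Proof.
apply/matrixP=> a j; rewrite !mxE.
have := enum_valP j; rewrite inE => /eqP/matrixP/(_ a 0); rewrite !mxE => <-.
by apply: eq_bigr => l _; rewrite !mxE.
Qed.

Hypothesis W_eigen : forall i, exists mu, Fmat W *m col i W = mu *: col i W.

Lemma dotc_col_clusterMx i j :
  i \notin cluster W lam -> dotc (col i W) (col j X) = 0.
Proof.
move=> i_out; have [mu Wi] := W_eigen i.
have := enum_valP j; rewrite inE col_clusterMx => /eqP Wj.
rewrite /dotc (eigenvectors_sym_orthogonal trmx_Fmat Wi Wj) ?mxE //.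
by apply: contraNneq i_out => <-; rewrite inE Wi.
Qed.

Lemma Fmat_clusterMx_gram : Fmat W *m X = X *m M.
Proof.
apply/matrixP=> a j; rewrite -!mulmxA mxE [RHS]mxE.
rewrite (bigID (mem (cluster W lam))) /= [Y in _ + Y]big1 ?addr0; last first.
  by move=> i /dotc_col_clusterMx i_out; rewrite trmx_mul_entry i_out mulr0.
rewrite big_enum_val; apply: eq_bigr => k _.
by rewrite !trmx_mul_entry !col_clusterMx clusterMxE.
Qed.

Lemma gramMx_scaled_proj : M *m M = lam *: M.
Proof.
by rewrite {1}/gramMx -mulmxA -Fmat_clusterMx_gram Fmat_clusterMx scalemxAr.
Qed.

Lemma rank_clusterMx : lam != 0 -> \rank X = \rank M.
Proof.
move=> lam_neq0; apply/eqP; rewrite eqn_leq mxrankM_maxr andbT.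
have -> : X = (lam^-1 *: X) *m M.
  by rewrite -scalemxAl -Fmat_clusterMx_gram Fmat_clusterMx scalerA mulVf ?scale1r.
exact: mxrankM_maxr.
Qed.

End Cluster.

Theorem corollary5 (R : rcfType) (m n : nat) (W : 'M[R]_(m, n)) (lamk : R) :
  (forall i : 'I_n, col i W != 0 /\
     exists2 mu : R, 0 < mu & Fmat W *m col i W = mu *: col i W) ->
  0 < lamk ->
  (exists2 v : 'cV[R]_m, v != 0 & Fmat W *m v = lamk *: v) ->
  let p := #|cluster W lamk| in
  let M := gramMx W lamk in
  let one : 'rV[R]_p := const_mx 1 in
  let one_perp := kermx (const_mx 1 : 'M[R]_(p, 1)) in
  simplex_geometry (clusterMx W lamk) <->
  ((kermx M^T == one)%MS /\            (* ker M_k = span 1 *)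
      (M^T == one_perp)%MS /\             (* Im M_k = 1^perp *)
      (eigenspace M^T 0 == one)%MS /\     (* eigenvalue 0 with eigenspace span 1 *)
      (eigenspace M^T lamk == one_perp)%MS /\ (* eigenvalue lamk with eigenspace 1^perp *)
      (forall a : R, eigenvalue M^T a -> a = 0 \/ a = lamk) /\
      lamk = p%:R / (\rank (clusterMx W lamk))%:R).
Proof.
move=> W_eigen lam_gt0 _ p M one one_perp.
have lam_neq0 : lamk != 0 by rewrite gt_eqF.
have {}W_eigen i : exists mu, Fmat W *m col i W = mu *: col i W.
  by have [_ [mu _ Wi]] := W_eigen i; exists mu.
have MM : M *m M = lamk *: M := gramMx_scaled_proj _ W_eigen.
have MT : M^T = M := trmx_gramMx W lamk.
rewrite MT eigenspace0 (rank_clusterMx W_eigen lam_neq0).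
split=> [/simplex_geometryE[p_gt1 ME] | [kerM [imM [_ [_ [_ lamE]]]]]].
- have [kerM imM rkM lamE] := scaled_centering_proj MM p_gt1 ME.
  do !split=> //; last by rewrite rkM.
  + exact/eqmxP/(eqmx_trans (eqmxP (eigenspace_scaled_proj MM lam_neq0)) (eqmxP imM)).
  + exact: eigenvalue_scaled_proj MM.
- have p_gt0 : (0 < p)%N.
    by rewrite lt0n; apply: contra_neq lam_neq0 => p0; rewrite lamE p0 mul0r.
  have rkM : \rank M = p.-1 by rewrite (eqmx_rank imM) rank_ones_perp.
  have p_gt1 : (1 < p)%N.
    rewrite ltn_neqAle p_gt0 andbT; apply: contra_neq lam_neq0 => p1.
    by rewrite lamE rkM -p1 mulr0n invr0 mulr0.
  have p_neq0 : p%:R != 0 :> R by rewrite pnatr_eq0 -lt0n.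
  apply/simplex_geometryE; split=> //.
  apply: etrans (scaled_proj_eq_centering MM lam_neq0 MT p_neq0 imM) _.
  by rewrite -rkM -lamE.
Qed.
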